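(* Let $L$ be a construction of an ASC-hypergraph $H$ and let $Y\in L$. Then $L_Y$ is a construction of the ASC-hypergraph $H_Y$.
   Context: A hypergraph is a finite set $H$ of nonempty subsets of some finite set; its carrier is $\bigcup H$. For a family $F$ and set $Y$, $F_Y=\{X\in F\mid X\subseteq Y\}$. A hypergraph partition of $H$ is a partition $\{H_1,\dots,H_n\}$ ($n\ge0$) of the set $H$ with $\{\bigcup H_1,\dots,\bigcup H_n\}$ a partition of $\bigcup H$; $H$ is connected if it has exactly one hypergraph partition; the finest hypergraph partition is the unique one whose blocks are connected. $H$ is atomic if $\{x\}\in H$ for all $x\in\bigcup H$; saturated if $X_1,X_2\in H$ with $X_1\cap X_2\neq\emptyset$ imply $X_1\cup X_2\in H$. An ASC-hypergraph is one that is atomic, saturated and connected. Constructions of an atomic $H$, by induction on $|\bigcup H|$: (0) $\emptyset$ is the only construction of $\emptyset$; (1) if $|\bigcup H|\ge1$, $H$ connected, $x\in\bigcup H$, $K$ a construction of $H_{\bigcup H\setminus\{x\}}$, then $K\cup\{\bigcup H\}$ is a construction of $H$; (2) if $H$ is not connected with finest hypergraph partition $\{H_1,\dots,H_n\}$, $n\ge2$, and $K_i$ is a construction of $H_i$, then $K_1\cup\dots\cup K_n$ is a construction of $H$. *)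

From mathcomp Require Import all_boot.
Set Implicit Arguments. Unset Strict Implicit. Unset Printing Implicit Defensive.

Section Hyper.
Variable T : finType.
Implicit Types H F K P : {set {set T}}.

(* a hypergraph: a finite set of nonempty subsets of T; carrier = cover H *)
Definition hypergraph (H : {set {set T}}) : bool := set0 \notin H.

Definition restr (F : {set {set T}}) (Y : {set T}) : {set {set T}} :=
  [set X in F | X \subset Y].

Definition hpartition (H : {set {set T}}) (P : {set {set {set T}}}) : bool :=
  [&& partition P H,
      partition [set cover B | B in P] (cover H)
    & [forall B1 in P, forall B2 in P, (cover B1 == cover B2) ==> (B1 == B2)]].

Definition hconnected (H : {set {set T}}) : bool :=
  #|[set P : {set {set {set T}}} | hpartition H P]| == 1.

Definition finest_hpartition (H : {set {set T}}) (P : {set {set {set T}}}) : bool :=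
  hpartition H P && [forall B in P, hconnected B].

Definition atomic (H : {set {set T}}) : Prop :=
  forall x, x \in cover H -> [set x] \in H.

Definition saturated (H : {set {set T}}) : Prop :=
  forall X1 X2, X1 \in H -> X2 \in H -> X1 :&: X2 != set0 -> X1 :|: X2 \in H.

Definition ASC (H : {set {set T}}) : Prop :=
  [/\ atomic H, saturated H & hconnected H].

(* construction H K : K is a construction of the atomic hypergraph H *)
Inductive construction : {set {set T}} -> {set {set T}} -> Prop :=
| constr0 : construction set0 set0
| constr1 (H K : {set {set T}}) (x : T) :
    hypergraph H -> atomic H ->
    0 < #|cover H| -> hconnected H -> x \in cover H ->
    construction (restr H (cover H :\ x)) K ->
    construction H (cover H |: K)
| constr2 (H : {set {set T}}) (P : {set {set {set T}}})
          (Kf : {set {set T}} -> {set {set T}}) :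
    hypergraph H -> atomic H ->
    ~~ hconnected H -> finest_hpartition H P -> 2 <= #|P| ->
    (forall B, B \in P -> construction B (Kf B)) ->
    construction H (\bigcup_(B in P) Kf B).

End Hyper.

From mathcomp Require Import all_boot.
Set Implicit Arguments. Unset Strict Implicit. Unset Printing Implicit Defensive.

(* A member Y of L is either the carrier of a
   connected stage, where H_Y is that whole stage, or it comes from a smaller
   stage; there the restriction to Y only sees that stage, because Y avoids
   the removed vertex x, resp. lies inside the carrier of a single block of
   the finest partition. Saturation is inherited by restrictions and by
   blocks, since the union of two overlapping edges stays in one block. *)

Section Restriction.
Variable T : finType.
Implicit Types H K : {set {set T}}.
Implicit Types A X Y Z : {set T}.

Lemma cover_restr_sub H A : cover (restr H A) \subset A.
Proof.
apply/subsetP => x /bigcupP [X]; rewrite inE => /andP [_ XA].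
exact: (subsetP XA).
Qed.

Lemma restr_sub H A : restr H A \subset H.
Proof. by apply/subsetP => X; rewrite inE => /andP []. Qed.

Lemma cover_subset H K : H \subset K -> cover H \subset cover K.
Proof. by move=> HK; apply/bigcupsP => X /(subsetP HK) KX; apply: bigcup_sup. Qed.

Lemma restr_restr H A Y : Y \subset A -> restr (restr H A) Y = restr H Y.
Proof.
move=> YA; apply/setP => X; rewrite !inE.
by case XY: (X \subset Y); rewrite ?andbF // (subset_trans XY YA) !andbT.
Qed.

Lemma restr_id K A : (forall Z, Z \in K -> Z \subset A) -> restr K A = K.
Proof.
move=> KA; apply/setP => X; rewrite inE.
by case XK: (X \in K); rewrite //= KA.
Qed.

Lemma restr_setU1 K A Y : ~~ (A \subset Y) -> restr (A |: K) Y = restr K Y.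
Proof.
move=> AY; apply/setP => Z; rewrite !inE.
by case: (eqVneq Z A) => [->|]; rewrite ?(negbTE AY) ?andbF.
Qed.

Lemma saturated_restr H A : saturated H -> saturated (restr H A).
Proof.
move=> satH X1 X2; rewrite !inE => /andP [H1 sub1] /andP [H2 sub2] meet12.
by rewrite satH // subUset sub1 sub2.
Qed.

End Restriction.

Section Partition.
Variable T : finType.
Implicit Types H : {set {set T}}.
Implicit Types P : {set {set {set T}}}.
Implicit Types B : {set {set T}}.
Implicit Types X Y Z : {set T}.

Lemma hpartition_cover H P : hpartition H P -> cover P = H.
Proof. by case/and3P => /and3P [/eqP]. Qed.

Lemma hpartition_block_sub H P B : hpartition H P -> B \in P -> B \subset H.
Proof. by move/hpartition_cover <-; apply: bigcup_sup. Qed.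

Lemma hpartition_blockP H P X :
  hpartition H P -> X \in H -> exists2 B, B \in P & X \in B.
Proof. by move/hpartition_cover <- => /bigcupP. Qed.

(* The injectivity clause of [hpartition] is needed when two blocks have the
   same (nonempty) carrier, as disjointness of the carriers says nothing then. *)
Lemma hpartition_block_eq H P B1 B2 x : hpartition H P -> B1 \in P -> B2 \in P ->
  x \in cover B1 -> x \in cover B2 -> B1 = B2.
Proof.
case/and3P => _ /andP [_ /andP [trivP _]] /forallP injP P1 P2 x1 x2.
case: (eqVneq (cover B1) (cover B2)) => [eq12 | neq12].
  by apply/eqP; move/(_ B1): injP; rewrite P1 => /forallP /(_ B2); rewrite P2 eq12 eqxx.
move/trivIsetP: trivP => /(_ (cover B1) (cover B2)).
rewrite !imset_f // => /(_ isT isT neq12) /disjoint_setI0 /setP /(_ x).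
by rewrite !inE x1 x2.
Qed.

Lemma saturated_block H P B : hypergraph H -> saturated H ->
  hpartition H P -> B \in P -> saturated B.
Proof.
move=> hypH satH partP PB X1 X2 B1 B2 meet12.
have BH := hpartition_block_sub partP PB.
have [B' PB' UB'] := hpartition_blockP partP (satH _ _ (subsetP BH _ B1) (subsetP BH _ B2) meet12).
have [y yX1] : exists y, y \in X1.
  by apply/set0Pn; apply: contraNneq hypH => <-; apply: (subsetP BH).
suff -> : B = B' by [].
apply: (hpartition_block_eq (x := y) partP PB PB'); apply/bigcupP.
  by exists X1.
by exists (X1 :|: X2); rewrite // inE yX1.
Qed.

Lemma restr_bigcup_block H P (F : {set {set T}} -> {set {set T}}) B Y :
  hpartition H P -> B \in P -> Y \subset cover B ->
  (forall B' Z, B' \in P -> Z \in F B' -> (Z != set0) && (Z \subset cover B')) ->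
  restr (\bigcup_(B' in P) F B') Y = restr (F B) Y.
Proof.
move=> partP PB YB FP; apply/setP => Z; rewrite !inE.
case ZY: (Z \subset Y); rewrite ?andbF ?andbT //.
apply/idP/idP => [/bigcupP [B' PB' ZB'] | ZB]; last by apply/bigcupP; exists B.
case/andP: (FP B' Z PB' ZB') => /set0Pn [y yZ] ZcB'.
suff -> : B = B' by [].
apply: (hpartition_block_eq (x := y) partP PB PB').
  exact: subsetP YB _ (subsetP ZY _ yZ).
exact: subsetP ZcB' _ yZ.
Qed.

Lemma restr_block H P B Y : hypergraph H -> hpartition H P -> B \in P ->
  Y \subset cover B -> restr H Y = restr B Y.
Proof.
move=> hypH partP PB YB.
rewrite -{1}(hpartition_cover partP) (restr_bigcup_block (F := id) partP PB YB) //.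
move=> B' Z PB' ZB'; rewrite (bigcup_sup Z ZB') andbT.
by apply: contraNneq hypH => <-; apply: (subsetP (hpartition_block_sub partP PB')).
Qed.

End Partition.

Lemma construction_mem (T : finType) (H K : {set {set T}}) : construction H K ->
  forall Z, Z \in K -> (Z != set0) && (Z \subset cover H).
Proof.
elim => {H K} [Z | H K x _ _ carH _ _ _ IH Z | H P Kf _ _ _ finP _ _ IH Z].
- by rewrite inE.
- rewrite in_setU1 => /orP [/eqP -> | ZK]; first by rewrite subxx andbT -card_gt0.
  case/andP: (IH Z ZK) => -> /= ZH.
  exact: subset_trans ZH (cover_subset (restr_sub _ _)).
- case/bigcupP => B PB ZB; case/andP: (IH B PB Z ZB) => -> /= ZB'.
  apply: subset_trans ZB' (cover_subset _).
  by case/andP: finP => partP _; apply: hpartition_block_sub partP PB.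
Qed.

Lemma construction_restr (T : finType) (H K : {set {set T}}) (Y : {set T}) :
  construction H K -> saturated H -> Y \in K ->
  ASC (restr H Y) /\ construction (restr H Y) (restr K Y).
Proof.
elim=> {H K} [| H K x hypH atH carH conH xH consK IH | H P Kf hypH atH _ finP _ consKf IH] satH.
- by rewrite inE.
- have consH := constr1 hypH atH carH conH xH consK.
  rewrite in_setU1 => /orP [/eqP -> | YK].
  + rewrite restr_id => [|X HX]; last exact: bigcup_sup.
    rewrite restr_id => [|Z /(construction_mem consH) /andP [] //].
    by split; first split.
  + have /andP [_ YHx] := construction_mem consK YK.
    have {}YHx : Y \subset cover H :\ x := subset_trans YHx (cover_restr_sub _ _).
    have [ASCY consY] := IH (@saturated_restr _ H _ satH) YK.
    rewrite restr_restr // in ASCY consY; rewrite restr_setU1 //.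
    by apply/subsetPn; exists x => //; apply/negP => /(subsetP YHx); rewrite !inE eqxx.
- case/bigcupP=> B PB YB; have /andP [partP _] := finP.
  have /andP [_ YcB] := construction_mem (consKf B PB) YB.
  have [ASCY consY] := IH B PB (saturated_block hypH satH partP PB) YB.
  rewrite (restr_block hypH partP PB YcB) (restr_bigcup_block partP PB YcB) //.
  by move=> B' Z PB'; apply: construction_mem (consKf B' PB') Z.
Qed.

Theorem proposition7p1 (T : finType) (H L : {set {set T}}) (Y : {set T}) :
  hypergraph H -> ASC H -> construction H L -> Y \in L ->
  ASC (restr H Y) /\ construction (restr H Y) (restr L Y).
Proof. by move=> _ [_ satH _] /construction_restr; apply. Qed.
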